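(* Let $N\ge 2$ and $1\le \tilde N\le N-1$ be integers, and consider the value functions $V_n^{\tilde N}$, $n\in\{0,\dots,N\}$, and the minimizers $\mu_n$ defined in the context. Suppose there exists $\beta>0$ such that, for all $x\in\mathcal{X}$, $$V_{\tilde N+1}^{\tilde N}(x)\le (\beta+1)\,V_{\tilde N}^{\tilde N}(x)\qquad\text{and}\qquad V_n^{\tilde N}(x)\le (\beta+1)\,l(x,\mu_n(x))\ \text{ for all } n\in\{\tilde N+1,\dots,N\}.$$ Then for all $x\in\mathcal{X}$, $$\frac{(\beta+1)^{N-\tilde N-1}}{(\beta+1)^{N-\tilde N-1}+\beta^{N-\tilde N}}\;V_N^{\tilde N}(x)\;\le\; V_{N-1}^{\tilde N}(x).$$
   Context: Let $\mathcal{D}\subset\mathbb{R}^n$ and $\mathcal{U}\subset\mathbb{R}^m$ be compact, and let $f:\mathcal{D}\times\mathcal{U}\to\mathcal{D}$ define the discrete-time system $x(k+1)=f(x(k),u(k))$, with $f(0,0)=0$. The stage cost $l:\mathcal{D}\times\mathcal{U}\to[0,\infty)$ is positive definite with $l(0,0)=0$. The set $\mathcal{X}\subseteq\mathcal{D}$ is control invariant: for every $x\in\mathcal{X}$ there is $u\in\mathcal{U}$ with $f(x,u)\in\mathcal{X}$. For $x\in\mathcal{X}$ write $\mathcal{U}(x)=\{u\in\mathcal{U}: f(x,u)\in\mathcal{X}\}$. Fix integers $N$ and $\tilde N$ with $0\le\tilde N\le N-1$. Define value functions on $\mathcal{X}$ recursively (dynamic programming form of the MPC problem with prediction horizon $N$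 in which the state constraint $x\in\mathcal{X}$ is imposed only during the first $N-\tilde N$ steps, the last $\tilde N$ steps being unconstrained): - $V_0^{\tilde N}\equiv 0$. - For $n\in\{1,\dots,\tilde N\}$: $V_n^{\tilde N}(x)=\min_{u\in\mathcal{U}}\big[V_{n-1}^{\tilde N}(f(x,u))+l(x,u)\big]$, with $\mu_n(x)$ a minimizer. - For $n\in\{\tilde N+1,\dots,N\}$: $V_n^{\tilde N}(x)=\min_{u\in\mathcal{U}(x)}\big[V_{n-1}^{\tilde N}(f(x,u))+l(x,u)\big]$, with $\mu_n(x)$ a minimizer; in particular $f(x,\mu_n(x))\in\mathcal{X}$. Equivalently, $V_n^{\tilde N}(x)$ is the minimal $n$-step cost $\sum_{i=0}^{n-1}l(x_i,u_i)$ over $u_i\in\mathcal{U}$, with $x_0=x$, $x_{i+1}=f(x_i,u_i)$, subject to the state constraints on the early steps of the horizon. All minima are assumed to be attained. *)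

From HB Require Import structures.
From mathcomp Require Import all_boot all_order all_algebra.
From mathcomp Require Import all_classical all_reals topology normedtype matrix_topology matrix_normedtype.
Set Implicit Arguments. Unset Strict Implicit. Unset Printing Implicit Defensive.
Import Order.TTheory GRing.Theory Num.Theory numFieldNormedType.Exports.
Local Open Scope ring_scope.
Local Open Scope classical_set_scope.

Definition mpc_setting (R : realType) (n m : nat)
  (D : set 'rV[R]_n) (U : set 'rV[R]_m) (X : set 'rV[R]_n)
  (f : 'rV[R]_n -> 'rV[R]_m -> 'rV[R]_n) (l : 'rV[R]_n -> 'rV[R]_m -> R) : Prop :=
  [/\ compact D /\ compact U,
      (forall x u, D x -> U u -> D (f x u)) /\ [/\ D 0, U 0 & f 0 0 = 0],
      (forall x u, D x -> U u -> 0 <= l x u),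
      (l 0 0 = 0 /\ (forall x u, D x -> U u -> (x, u) <> (0, 0) -> 0 < l x u)) &
      (X `<=` D /\ (forall x, X x -> exists2 u, U u & X (f x u)))].

(* V n = V_n^{Nt} and mu n = mu_n are value functions / minimizers of the
   dynamic-programming recursion in which the state constraint x ∈ X is
   imposed only in the stages n ∈ {Nt+1, …, N}. *)
Definition value_functions (R : realType) (n m : nat)
  (D : set 'rV[R]_n) (U : set 'rV[R]_m) (X : set 'rV[R]_n)
  (f : 'rV[R]_n -> 'rV[R]_m -> 'rV[R]_n) (l : 'rV[R]_n -> 'rV[R]_m -> R)
  (N Nt : nat) (V : nat -> 'rV[R]_n -> R) (mu : nat -> 'rV[R]_n -> 'rV[R]_m)
  : Prop :=
  [/\ (forall x, D x -> V 0%N x = 0),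
      (forall k x, (1 <= k <= Nt)%N -> D x ->
         [/\ U (mu k x),
         V k x = V k.-1 (f x (mu k x)) + l x (mu k x) &
         (forall u, U u -> V k x <= V k.-1 (f x u) + l x u)]) &
      (forall k x, (Nt < k <= N)%N -> X x ->
         [/\ U (mu k x), X (f x (mu k x)),
         V k x = V k.-1 (f x (mu k x)) + l x (mu k x) &
         (forall u, U u -> X (f x u) -> V k x <= V k.-1 (f x u) + l x u)])].

From HB Require Import structures.
From mathcomp Require Import all_boot all_order all_algebra.
From mathcomp Require Import all_classical all_reals topology normedtype matrix_topology matrix_normedtype.
From mathcomp Require Import ring lra zify.
Import Order.TTheory GRing.Theory Num.Theory numFieldNormedType.Exports.
Set Implicit Arguments.
Unset Strict Implicit.
Local Open Scope ring_scope.
Local Open Scope classical_set_scope.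

(* Write [d_k x = V_k x - V_(k-1) x] for the constrained stages.  Following the
   optimal input [mu_k x] to the successor [x'], suboptimality of that input at
   horizon [k+1] gives [d_(k+1) x <= d_k x'], while [V_k <= (beta+1) l] gives
   [V_(k-1) x' <= beta/(beta+1) V_k x].  Starting from [d_(Nt+1) <= beta V_Nt],
   induction yields [d_(Nt+j+1) <= beta^(j+1)/(beta+1)^j V_(Nt+j)]; for
   [j = N-Nt-1] this rearranges to the claimed bound. *)

Lemma ratio_mul_le_of_increment_le (R : realFieldType) (b c v w : R) :
  0 < b -> 0 < c -> w - v <= b / c * v -> c / (c + b) * w <= v.
Proof.
move=> b_gt0 c_gt0 le_wv.
have cb_gt0 : 0 < c + b by lra.
rewrite mulrAC ler_pdivrMr // -subr_ge0.
have : 0 <= c * (b / c * v - (w - v)) by rewrite mulr_ge0 ?subr_ge0 // ltW.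
by rewrite mulrBr mulrA mulrCA divff ?gt_eqF // mulr1; lra.
Qed.

Section ConstrainedStages.

Variables (R : realFieldType) (T S : Type) (U : set S) (X : set T).
Variables (f : T -> S -> T) (l : T -> S -> R).
Variables (N Nt : nat) (V : nat -> T -> R) (mu : nat -> T -> S).

Hypothesis constrained_dp : forall k x, (Nt < k <= N)%N -> X x ->
  [/\ U (mu k x), X (f x (mu k x)),
      V k x = V k.-1 (f x (mu k x)) + l x (mu k x) &
      (forall u, U u -> X (f x u) -> V k x <= V k.-1 (f x u) + l x u)].

Lemma value_increment_le_successor k x : (Nt < k < N)%N -> X x ->
  V k.+1 x - V k x <= V k (f x (mu k x)) - V k.-1 (f x (mu k x)).
Proof.
move=> /andP[lt_Nt_k lt_k_N] Xx.
have [Umu Xfx -> _] := constrained_dp (k := k) ltac:(lia) Xx.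
have [_ _ _ /(_ _ Umu Xfx) le_next] :=
  constrained_dp (k := k.+1) ltac:(lia) Xx.
by rewrite /= in le_next; lra.
Qed.

Variable beta : R.
Hypothesis beta_gt0 : 0 < beta.
Hypothesis value_le_scaled_stage_cost : forall x k, X x -> (Nt < k <= N)%N ->
  V k x <= (beta + 1) * l x (mu k x).
Hypothesis first_increment_le : forall x, X x -> V Nt.+1 x <= (beta + 1) * V Nt x.

Lemma value_successor_le k x : (Nt < k <= N)%N -> X x ->
  V k.-1 (f x (mu k x)) <= beta / (beta + 1) * V k x.
Proof.
move=> k_range Xx.
have [_ _ Vk_eq _] := constrained_dp k_range Xx.
have b1_gt0 : 0 < beta + 1 := addr_gt0 beta_gt0 ltr01.
rewrite -(ler_pM2l b1_gt0) mulrA mulrCA divff ?gt_eqF // mulr1.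
have := value_le_scaled_stage_cost Xx k_range.
rewrite Vk_eq !mulrDl !mulrDr !mul1r; lra.
Qed.

Lemma value_increment_le j x : (Nt + j < N)%N -> X x ->
  V (Nt + j).+1 x - V (Nt + j) x
    <= beta ^+ j.+1 / (beta + 1) ^+ j * V (Nt + j) x.
Proof.
elim: j x => [|j IHj] x lt_j_N Xx.
  by rewrite addn0 expr0 divr1 expr1; have := first_increment_le Xx; lra.
set k := (Nt + j).+1.
have k_range : (Nt < k <= N)%N by rewrite /k; lia.
have [_ Xfx _ _] := constrained_dp k_range Xx.
have ratio_ge0 : 0 <= beta ^+ j.+1 / (beta + 1) ^+ j.
  by rewrite divr_ge0 // exprn_ge0 // ltW // addr_gt0.
have geom : beta ^+ j.+2 / (beta + 1) ^+ j.+1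
    = beta ^+ j.+1 / (beta + 1) ^+ j * (beta / (beta + 1)).
  by rewrite !exprS; field; rewrite !gt_eqF ?exprn_gt0 // addr_gt0.
rewrite addnS -/k geom -mulrA.
have := value_increment_le_successor (k := k) ltac:(rewrite /k; lia) Xx.
have := IHj _ ltac:(lia) Xfx.
have := ler_wpM2l ratio_ge0 (value_successor_le k_range Xx).
rewrite /k /=; lra.
Qed.

End ConstrainedStages.

Theorem lemma2 (R : realType) (n m : nat)
  (D : set 'rV[R]_n) (U : set 'rV[R]_m) (X : set 'rV[R]_n)
  (f : 'rV[R]_n -> 'rV[R]_m -> 'rV[R]_n) (l : 'rV[R]_n -> 'rV[R]_m -> R)
  (N Nt : nat) (V : nat -> 'rV[R]_n -> R) (mu : nat -> 'rV[R]_n -> 'rV[R]_m)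
  (beta : R) :
  mpc_setting D U X f l ->
  (2 <= N)%N -> (1 <= Nt <= N - 1)%N ->
  value_functions D U X f l N Nt V mu ->
  0 < beta ->
  (forall x, X x -> V Nt.+1 x <= (beta + 1) * V Nt x) ->
  (forall x k, X x -> (Nt < k <= N)%N -> V k x <= (beta + 1) * l x (mu k x)) ->
  forall x, X x ->
    (beta + 1) ^+ (N - Nt - 1) / ((beta + 1) ^+ (N - Nt - 1) + beta ^+ (N - Nt))
      * V N x <= V N.-1 x.
Proof.
move=> _ _ Nt_range [_ _ constrained_dp] beta_gt0 first_incr le_stage_cost x Xx.
set j := (N - Nt - 1)%N.
have last_incr := value_increment_le constrained_dp beta_gt0 le_stage_cost
  first_incr (j := j) ltac:(rewrite /j; lia) Xx.
have Nt_j : (Nt + j)%N = N.-1 by rewrite /j; lia.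
rewrite Nt_j prednK in last_incr; last by lia.
have -> : (N - Nt)%N = j.+1 by rewrite /j; lia.
by apply: ratio_mul_le_of_increment_le last_incr; rewrite exprn_gt0 // addr_gt0.
Qed.
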